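(* Let $\Omega_n=\dfrac{\pi^{n/2}}{\Gamma\left(\frac n2+1\right)}$ for $n\in\mathbb{N}_0$, and \[ r(n)=1+\frac1{2n}-\frac3{8n^2}+\frac3{16n^3},\qquad s(n)=r(n)+\frac3{128n^4}. \] Then $r(n)<\frac{\Omega_n^2}{\Omega_{n-1}\Omega_{n+1}}$ for every integer $n\ge6$, and $\frac{\Omega_n^2}{\Omega_{n-1}\Omega_{n+1}}<s(n)$ for every integer $n\ge1$.
   Context: $\Omega_n$ is the volume of the unit ball in $\mathbb{R}^n$ ($\Omega_0=1$); $\Gamma$ is Euler's gamma function. *)

From Stdlib Require Import Reals.
From Coquelicot Require Import Coquelicot.
Open Scope R_scope.

Definition Gamma (x : R) : R :=
  RInt_gen (fun t => Rpower t (x - 1) * exp (- t)) (at_right 0) (Rbar_locally p_infty).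

Definition Omega (n : nat) : R :=
  Rpower PI (INR n / 2) / Gamma (INR n / 2 + 1).

Definition r_fun (n : nat) : R :=
  1 + 1 / (2 * INR n) - 3 / (8 * INR n ^ 2) + 3 / (16 * INR n ^ 3).

Definition s_fun (n : nat) : R := r_fun n + 3 / (128 * INR n ^ 4).

Definition omega_ratio (n : nat) : R :=
  Omega n ^ 2 / (Omega (n - 1) * Omega (n + 1)).

From Stdlib Require Import Reals Lra Lia Classical.
From Coquelicot Require Import Coquelicot.
Open Scope R_scope.

(* Write [R n = omega_ratio n = G(x) G(x+1) / G(x+1/2)^2] with [x = (n+1)/2].  The functional
   equation [G(x+1) = x G(x)] gives [R n * R (n+1) = (n+2)/(n+1)] and
   [R (n+2) = q n * R n] with [q n = (n+1)(n+3)/(n+2)^2], while log-convexity of the Euler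
   integral (pointwise AM-GM) gives [R n >= 1]; hence [R n -> 1].  The polynomials satisfy
   [s (n+2) < q n * s n] and, for [n >= 6], [r (n+2) >= q n * r n].  So along [n, n+2, n+4, ...]
   the quotient [R/s] strictly increases and [r/R] does not decrease; as both tend to 1, the first
   term of each lies strictly below 1. *)

Definition gamma_integrand (x t : R) : R := Rpower t (x - 1) * exp (- t).

Lemma ball_R_iff x e y : ball x e y <-> Rabs (y - x) < e.
Proof. reflexivity. Qed.

Lemma exp_le_mono a b : a <= b -> exp a <= exp b.
Proof.
  intros [Hlt | ->]; [left; now apply exp_increasing | right; reflexivity].
Qed.

Lemma exp_le_1 a : a <= 0 -> exp a <= 1.
Proof. intros Ha; rewrite <- exp_0; now apply exp_le_mono. Qed.

Lemma is_derive_Rpower y t : 0 < t ->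
  is_derive (fun u => Rpower u y) t (y * Rpower t (y - 1)).
Proof. intros Ht; apply is_derive_Reals, derivable_pt_lim_power, Ht. Qed.

Lemma continuous_Rpower y t : 0 < t -> continuous (fun u => Rpower u y) t.
Proof.
  intros Ht; apply (ex_derive_continuous (K := R_AbsRing) (V := R_NormedModule)).
  eexists; now apply is_derive_Rpower.
Qed.

Lemma continuous_exp_opp t : continuous (fun u => exp (- u)) t.
Proof.
  apply continuous_exp_comp,
    (ex_derive_continuous (K := R_AbsRing) (V := R_NormedModule) (fun u => - u)).
  auto_derive; auto.
Qed.

Lemma continuous_gamma_integrand x t : 0 < t -> continuous (gamma_integrand x) t.
Proof.
  intros Ht; apply (continuous_mult (fun u => Rpower u (x - 1)) (fun u => exp (- u))).
  - now apply continuous_Rpower.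
  - apply continuous_exp_opp.
Qed.

Lemma gamma_integrand_pos x t : 0 < gamma_integrand x t.
Proof. apply Rmult_lt_0_compat; apply exp_pos. Qed.

Lemma at_right_0_lt a0 : 0 < a0 -> at_right 0 (fun a => 0 < a < a0).
Proof.
  intros Ha0; exists (mkposreal a0 Ha0); intros y Hy Hy0.
  change (Rabs (y - 0) < a0) in Hy.
  rewrite Rminus_0_r, Rabs_right in Hy; lra.
Qed.

Lemma filter_prod_pos :
  filter_prod (at_right 0) (Rbar_locally p_infty) (fun ab => 0 < fst ab /\ 0 < snd ab).
Proof.
  apply (Filter_prod _ _ _ (fun a => 0 < a) (fun b => 0 < b)).
  - exists (mkposreal 1 Rlt_0_1); auto.
  - exists 0; auto.
  - auto.
Qed.

Section NonnegativeOnHalfLine.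

Variable f : R -> R.
Hypothesis f_cont : forall t, 0 < t -> continuous f t.
Hypothesis f_ge0 : forall t, 0 < t -> 0 <= f t.

Lemma ex_RInt_half_line a b : 0 < a -> 0 < b -> ex_RInt f a b.
Proof.
  intros Ha Hb; apply (ex_RInt_continuous (V := R_CompleteNormedModule)).
  intros z [Hz _]; apply f_cont.
  apply Rlt_le_trans with (Rmin a b); [now apply Rmin_glb_lt | exact Hz].
Qed.

Lemma RInt_half_line_ge0 a b : 0 < a -> a <= b -> 0 <= RInt f a b.
Proof.
  intros Ha Hab; apply RInt_ge_0; [exact Hab | apply ex_RInt_half_line; lra |].
  intros z Hz; apply f_ge0; lra.
Qed.

Lemma RInt_half_line_Chasles a b c : 0 < a -> 0 < b -> 0 < c ->
  RInt f a b + RInt f b c = RInt f a c.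
Proof.
  intros Ha Hb Hc.
  exact (RInt_Chasles f a b c (ex_RInt_half_line a b Ha Hb) (ex_RInt_half_line b c Hb Hc)).
Qed.

Lemma RInt_half_line_widen a a' b' b : 0 < a -> a <= a' -> a' <= b' -> b' <= b ->
  RInt f a' b' <= RInt f a b.
Proof.
  intros Ha Haa' Hab' Hbb.
  rewrite <- (RInt_half_line_Chasles a a' b), <- (RInt_half_line_Chasles a' b' b) by lra.
  pose proof (RInt_half_line_ge0 a a' Ha Haa').
  pose proof (RInt_half_line_ge0 b' b ltac:(lra) Hbb).
  lra.
Qed.

(* The improper integral is the supremum of the proper ones. *)
Lemma is_RInt_gen_half_line_bounded M :
  (forall a b, 0 < a -> a < b -> RInt f a b <= M) ->
  exists L, is_RInt_gen f (at_right 0) (Rbar_locally p_infty) L /\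
            forall a b, 0 < a -> a < b -> RInt f a b <= L.
Proof.
  intros HM.
  set (E := fun z => exists a b, 0 < a /\ a < b /\ z = RInt f a b).
  assert (HE : bound E) by (exists M; intros z (a & b & Ha & Hab & ->); now apply HM).
  assert (HE12 : E (RInt f 1 2)) by (exists 1, 2; repeat split; lra).
  destruct (completeness E HE (ex_intro _ _ HE12)) as [L [HLub HLleast]].
  assert (HL : forall a b, 0 < a -> a < b -> RInt f a b <= L)
    by (intros a b Ha Hab; apply HLub; now exists a, b).
  exists L; split; [| exact HL].
  apply filterlimi_locally; intros eps.
  assert (Hnear : exists a0 b0, 0 < a0 /\ a0 < b0 /\ L - eps < RInt f a0 b0).
  { apply NNPP; intros Hnone.
    assert (Hub : is_upper_bound E (L - eps)).
    { intros z (a & b & Ha & Hab & ->); apply Rnot_lt_le; intros Hlt.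
      apply Hnone; now exists a, b. }
    pose proof (HLleast _ Hub); pose proof (cond_pos eps); lra. }
  destruct Hnear as (a0 & b0 & Ha0 & Hab0 & Hlt).
  apply (Filter_prod _ _ _ (fun a => 0 < a < a0) (fun b => b0 < b)).
  - now apply at_right_0_lt.
  - now exists b0.
  - intros a b Ha Hb; exists (RInt f a b); split.
    + apply (RInt_correct (V := R_CompleteNormedModule)), ex_RInt_half_line; lra.
    + apply ball_R_iff; simpl.
      pose proof (HL a b ltac:(lra) ltac:(lra)).
      pose proof (RInt_half_line_widen a a0 b0 b ltac:(lra) ltac:(lra) ltac:(lra) ltac:(lra)).
      apply Rabs_def1; lra.
Qed.

End NonnegativeOnHalfLine.

Lemma ex_RInt_gamma_integrand x a b : 0 < a -> 0 < b -> ex_RInt (gamma_integrand x) a b.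
Proof.
  intros Ha Hb; apply ex_RInt_half_line.
  - intros t Ht; now apply continuous_gamma_integrand.
  - exact Ha.
  - exact Hb.
Qed.

Lemma RInt_gamma_integrand_0_1_le x a : 0 < x <= 1 -> 0 < a <= 1 ->
  RInt (gamma_integrand x) a 1 <= / x.
Proof.
  intros Hx Ha.
  assert (Hprim : is_RInt (fun t => Rpower t (x - 1)) a 1
                    (minus (/ x * Rpower 1 x) (/ x * Rpower a x))).
  { apply (is_RInt_derive (V := R_CompleteNormedModule) (fun u => / x * Rpower u x)).
    - intros z Hz; rewrite Rmin_left in Hz by lra.
      replace (Rpower z (x - 1)) with (/ x * (x * Rpower z (x - 1))) by (field; lra).
      apply is_derive_scal, is_derive_Rpower; lra.
    - intros z Hz; rewrite Rmin_left in Hz by lra.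
      apply continuous_Rpower; lra. }
  apply Rle_trans with (RInt (fun t => Rpower t (x - 1)) a 1).
  - apply RInt_le; [lra | apply ex_RInt_gamma_integrand; lra | eexists; exact Hprim |].
    intros t Ht; unfold gamma_integrand.
    assert (exp (- t) <= 1) by (apply exp_le_1; lra).
    pose proof (exp_pos ((x - 1) * ln t)); unfold Rpower; nra.
  - rewrite (is_RInt_unique _ _ _ _ Hprim); unfold minus, plus, opp; simpl.
    unfold Rpower; rewrite ln_1, Rmult_0_r, exp_0.
    pose proof (exp_pos (x * ln a)); pose proof (Rinv_0_lt_compat x ltac:(lra)); nra.
Qed.

Lemma RInt_gamma_integrand_1_oo_le x b : x <= 1 -> 1 <= b ->
  RInt (gamma_integrand x) 1 b <= 1.
Proof.
  intros Hx Hb.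
  assert (Hprim : is_RInt (fun t => exp (- t)) 1 b (minus (- exp (- b)) (- exp (- 1)))).
  { apply (is_RInt_derive (V := R_CompleteNormedModule) (fun u => - exp (- u))).
    - intros z _; auto_derive; auto; ring.
    - intros z _; apply continuous_exp_opp. }
  apply Rle_trans with (RInt (fun t => exp (- t)) 1 b).
  - apply RInt_le; [lra | apply ex_RInt_gamma_integrand; lra | eexists; exact Hprim |].
    intros t Ht; unfold gamma_integrand, Rpower.
    assert (0 <= ln t) by (rewrite <- ln_1; apply ln_le; lra).
    assert (exp ((x - 1) * ln t) <= 1) by (apply exp_le_1; nra).
    pose proof (exp_pos (- t)); nra.
  - rewrite (is_RInt_unique _ _ _ _ Hprim); unfold minus, plus, opp; simpl.
    assert (exp (- 1) <= 1) by (apply exp_le_1; lra).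
    pose proof (exp_pos (- b)); lra.
Qed.

Lemma is_RInt_gen_gamma_integrand_0_1 x : 0 < x <= 1 ->
  exists L, is_RInt_gen (gamma_integrand x) (at_right 0) (Rbar_locally p_infty) L /\ 0 < L.
Proof.
  intros Hx.
  assert (Hcont : forall t, 0 < t -> continuous (gamma_integrand x) t)
    by (intros; now apply continuous_gamma_integrand).
  assert (Hge0 : forall t, 0 < t -> 0 <= gamma_integrand x t)
    by (intros; left; apply gamma_integrand_pos).
  destruct (is_RInt_gen_half_line_bounded _ Hcont Hge0 (/ x + 1)) as [L [HL HLub]].
  - intros a b Ha Hab.
    set (a' := Rmin a 1); set (b' := Rmax b 1).
    assert (0 < a' <= 1) by (split; [apply Rmin_glb_lt; lra | apply Rmin_r]).
    assert (1 <= b') by apply Rmax_r.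
    assert (a' <= a) by apply Rmin_l.
    assert (b <= b') by apply Rmax_l.
    apply Rle_trans with (RInt (gamma_integrand x) a' b').
    + apply (RInt_half_line_widen _ Hcont Hge0); lra.
    + rewrite <- (RInt_half_line_Chasles _ Hcont a' 1 b') by lra.
      pose proof (RInt_gamma_integrand_0_1_le x a' Hx ltac:(lra)).
      pose proof (RInt_gamma_integrand_1_oo_le x b' ltac:(lra) ltac:(lra)).
      lra.
  - exists L; split; [exact HL |].
    apply Rlt_le_trans with (RInt (gamma_integrand x) 1 2); [| apply HLub; lra].
    assert (H := RInt_lt (fun _ => 0) (gamma_integrand x) 1 2 ltac:(lra)).
    rewrite RInt_const in H; unfold scal in H; simpl in H; unfold mult in H; simpl in H.
    rewrite Rmult_0_r in H; apply H.
    + intros; apply continuous_gamma_integrand; lra.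
    + intros; apply continuous_const.
    + intros; apply gamma_integrand_pos.
Qed.

Lemma filterlim_power_exp_at_right_0 x : 0 < x ->
  filterlim (fun t => exp (x * ln t - t)) (at_right 0) (locally 0).
Proof.
  intros Hx; apply filterlim_locally; intros eps.
  assert (Hd : 0 < Rpower eps (/ x)) by apply exp_pos.
  exists (mkposreal _ Hd); intros t Ht Htpos.
  change (Rabs (t - 0) < Rpower eps (/ x)) in Ht.
  rewrite Rminus_0_r, Rabs_right in Ht by lra.
  apply ball_R_iff; rewrite Rminus_0_r, Rabs_right by (left; apply exp_pos).
  apply Rle_lt_trans with (exp (x * ln t)); [apply exp_le_mono; lra |].
  change (Rpower t x < eps).
  rewrite <- (Rpower_1 eps) by apply cond_pos.
  replace 1 with (/ x * x) by (field; lra).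
  rewrite <- Rpower_mult; now apply Rlt_Rpower_l.
Qed.

Lemma filterlim_power_exp_p_infty x : 0 < x ->
  filterlim (fun t => exp (x * ln t - t)) (Rbar_locally p_infty) (locally 0).
Proof.
  intros Hx; apply filterlim_locally; intros eps.
  assert (Hd : 0 < / (2 * x)) by (apply Rinv_0_lt_compat; lra).
  destruct (proj1 (filterlim_locally _ _) is_lim_div_ln_p (mkposreal _ Hd)) as [M HM].
  exists (Rmax (Rmax M 1) (-2 * ln eps)); intros t Ht.
  pose proof (Rmax_l M 1); pose proof (Rmax_r M 1).
  pose proof (Rmax_l (Rmax M 1) (-2 * ln eps)); pose proof (Rmax_r (Rmax M 1) (-2 * ln eps)).
  assert (HtM : M < t) by lra.
  assert (Ht1 : 1 < t) by lra.
  assert (Hteps : -2 * ln eps < t) by lra.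
  specialize (HM t HtM); change (Rabs (ln t / t - 0) < / (2 * x)) in HM.
  rewrite Rminus_0_r in HM; apply Rabs_def2 in HM; destruct HM as [HM _].
  assert (Hln : x * ln t < t / 2).
  { apply (Rmult_lt_compat_l (2 * x * t)) in HM; [| nra].
    replace (2 * x * t * (ln t / t)) with (2 * (x * ln t)) in HM by (field; lra).
    replace (2 * x * t * / (2 * x)) with t in HM by (field; lra).
    lra. }
  apply ball_R_iff; rewrite Rminus_0_r, Rabs_right by (left; apply exp_pos).
  rewrite <- (exp_ln eps) by apply cond_pos; apply exp_increasing; lra.
Qed.

(* Integrating [d/dt (t^x e^{-t}) = x t^(x-1) e^{-t} - t^x e^{-t}] over (0, +oo). *)
Lemma is_RInt_gen_gamma_integrand_succ (x L : R) : 0 < x ->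
  is_RInt_gen (gamma_integrand x) (at_right 0) (Rbar_locally p_infty) L ->
  is_RInt_gen (gamma_integrand (x + 1)) (at_right 0) (Rbar_locally p_infty) (x * L).
Proof.
  intros Hx HL.
  set (h := fun t => exp (x * ln t - t)).
  set (dh := fun t => x * gamma_integrand x t - gamma_integrand (x + 1) t).
  assert (Hdh : forall t, 0 < t -> is_derive h t (dh t)).
  { intros t Ht; unfold h, dh, gamma_integrand, Rpower.
    auto_derive; [exact Ht |].
    assert (E : exp (x * ln t) = exp ((x - 1) * ln t) * t).
    { replace (x * ln t) with ((x - 1) * ln t + ln t) by ring.
      now rewrite exp_plus, exp_ln. }
    replace (x + 1 - 1) with x by ring.
    rewrite exp_plus, E; field; lra. }
  assert (Hmin : forall a b z, 0 < a -> 0 < b -> Rmin a b <= z -> 0 < z).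
  { intros a b z Ha Hb Hz; pose proof (Rmin_glb_lt a b 0 Ha Hb); lra. }
  assert (Hint : is_RInt_gen (Derive h) (at_right 0) (Rbar_locally p_infty) (0 - 0)).
  { apply is_RInt_gen_Derive.
    - eapply filter_imp; [| exact filter_prod_pos]; intros [a b] [Ha Hb] z Hz; simpl in *.
      eexists; apply Hdh; eapply Hmin; [exact Ha | exact Hb | apply Hz].
    - eapply filter_imp; [| exact filter_prod_pos]; intros [a b] [Ha Hb] z Hz; simpl in *.
      assert (Hz0 : 0 < z) by (eapply Hmin; [exact Ha | exact Hb | apply Hz]).
      apply (continuous_ext_loc _ dh).
      + eapply filter_imp; [| apply (open_gt 0 z Hz0)].
        intros y Hy; symmetry; now apply is_derive_unique, Hdh.
      + apply (continuous_minus (fun t => scal x (gamma_integrand x t)) (gamma_integrand (x + 1))).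
        * apply (continuous_scal_r (U := R_UniformSpace) (K := R_AbsRing) (V := R_NormedModule)).
          now apply continuous_gamma_integrand.
        * now apply continuous_gamma_integrand.
    - now apply filterlim_power_exp_at_right_0.
    - now apply filterlim_power_exp_p_infty. }
  assert (Hdh0 : is_RInt_gen dh (at_right 0) (Rbar_locally p_infty) (0 - 0)).
  { eapply is_RInt_gen_ext; [| exact Hint].
    eapply filter_imp; [| exact filter_prod_pos]; intros [a b] [Ha Hb] z Hz; simpl in *.
    apply is_derive_unique, Hdh; eapply Hmin; [exact Ha | exact Hb | left; apply Hz]. }
  replace (x * L) with (minus (scal x L) (0 - 0))
    by (unfold minus, plus, opp, scal; simpl; unfold mult; simpl; ring).
  eapply is_RInt_gen_ext; [| exact (is_RInt_gen_minus _ _ _ _ (is_RInt_gen_scal _ x _ HL) Hdh0)].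
  apply filter_forall; intros ab z _.
  unfold dh, minus, plus, opp, scal; simpl; unfold mult; simpl; ring.
Qed.

(* Pointwise AM-GM: [t^(x-1/2) e^{-t} <= (a t^(x-1) + t^x / a) e^{-t} / 2], with [a] tuned to
   make the integrated bound equal to [sqrt (L0 L2)]. *)
Lemma is_RInt_gen_gamma_integrand_half_log_convex (x L0 L1 L2 : R) :
  is_RInt_gen (gamma_integrand x) (at_right 0) (Rbar_locally p_infty) L0 ->
  is_RInt_gen (gamma_integrand (x + /2)) (at_right 0) (Rbar_locally p_infty) L1 ->
  is_RInt_gen (gamma_integrand (x + 1)) (at_right 0) (Rbar_locally p_infty) L2 ->
  0 < L0 -> 0 < L2 -> L1 ^ 2 <= L0 * L2.
Proof.
  intros H0 H1 H2 P0 P2.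
  set (a := sqrt (L2 / L0)).
  assert (Ha : 0 < a) by (apply sqrt_lt_R0, Rdiv_lt_0_compat; assumption).
  assert (HL2 : L2 = a * a * L0)
    by (unfold a; rewrite sqrt_sqrt by (left; now apply Rdiv_lt_0_compat); field; lra).
  assert (Hbound := is_RInt_gen_scal _ (/ 2) _
    (is_RInt_gen_plus _ _ _ _ (is_RInt_gen_scal _ a _ H0) (is_RInt_gen_scal _ (/ a) _ H2))).
  assert (Hle : filter_prod (at_right 0) (Rbar_locally p_infty) (fun ab => fst ab <= snd ab)).
  { apply (Filter_prod _ _ _ (fun a => 0 < a < 1) (fun b => 1 < b)).
    - apply at_right_0_lt; lra.
    - now exists 1.
    - intros; simpl; lra. }
  assert (Hpt : filter_prod (at_right 0) (Rbar_locally p_infty) (fun ab => forall t,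
      fst ab <= t <= snd ab -> norm (gamma_integrand (x + /2) t) <=
      scal (/ 2) (plus (scal a (gamma_integrand x t)) (scal (/ a) (gamma_integrand (x + 1) t))))).
  { apply filter_forall; intros ab t _.
    unfold scal, plus, norm; simpl; unfold mult, abs; simpl.
    pose proof (gamma_integrand_pos (x + /2) t); pose proof (gamma_integrand_pos x t).
    rewrite Rabs_right by lra.
    assert (Hgeo : gamma_integrand (x + /2) t ^ 2
                   = gamma_integrand x t * gamma_integrand (x + 1) t).
    { unfold gamma_integrand, Rpower; simpl; rewrite Rmult_1_r, <- !exp_plus.
      apply (f_equal exp); field. }
    set (w := gamma_integrand (x + /2) t) in *; set (u := gamma_integrand x t) in *.
    set (v := gamma_integrand (x + 1) t) in *.
    assert (Hsq : 0 <= u * (a * a * u + v - 2 * a * w))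
      by (pose proof (pow2_ge_0 (a * u - w)); nra).
    assert (0 <= a * a * u + v - 2 * a * w) by nra.
    apply (Rmult_le_reg_l (2 * a)); [lra |].
    replace (2 * a * (/ 2 * (a * u + / a * v))) with (a * a * u + v) by (field; lra).
    lra. }
  assert (Hn := RInt_gen_norm (gamma_integrand (x + /2)) _ L1 _ Hle Hpt H1 Hbound).
  unfold scal, plus, norm in Hn; simpl in Hn; unfold mult, abs in Hn; simpl in Hn.
  replace (/ 2 * (a * L0 + / a * L2)) with (a * L0) in Hn by (rewrite HL2; field; lra).
  rewrite HL2; replace (L1 ^ 2) with (Rabs L1 ^ 2) by (rewrite RPow_abs; apply Rabs_right; nra).
  pose proof (Rabs_pos L1); nra.
Qed.

Lemma gamma_integral_exists x : 0 < x ->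
  exists L, is_RInt_gen (gamma_integrand x) (at_right 0) (Rbar_locally p_infty) L /\ 0 < L.
Proof.
  intros Hx; destruct (INR_unbounded x) as [n Hn].
  revert x Hx Hn; induction n as [| n IH]; intros x Hx Hn; [simpl in Hn; lra |].
  rewrite S_INR in Hn; destruct (Rle_lt_dec x 1) as [Hx1 | Hx1].
  - now apply is_RInt_gen_gamma_integrand_0_1.
  - destruct (IH (x - 1) ltac:(lra) ltac:(lra)) as [L [HL HL0]].
    exists ((x - 1) * L); split; [| apply Rmult_lt_0_compat; lra].
    replace x with (x - 1 + 1) at 1 by ring.
    apply is_RInt_gen_gamma_integrand_succ; [lra | exact HL].
Qed.

Lemma is_RInt_gen_Gamma x : 0 < x ->
  is_RInt_gen (gamma_integrand x) (at_right 0) (Rbar_locally p_infty) (Gamma x) /\ 0 < Gamma x.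
Proof.
  intros Hx; destruct (gamma_integral_exists x Hx) as [L [HL HL0]].
  replace (Gamma x) with L by (symmetry; exact (is_RInt_gen_unique _ _ HL)).
  now split.
Qed.

Lemma Gamma_pos x : 0 < x -> 0 < Gamma x.
Proof. intros Hx; apply (is_RInt_gen_Gamma x Hx). Qed.

Lemma Gamma_succ x : 0 < x -> Gamma (x + 1) = x * Gamma x.
Proof.
  intros Hx; apply is_RInt_gen_unique, is_RInt_gen_gamma_integrand_succ; [exact Hx |].
  apply (is_RInt_gen_Gamma x Hx).
Qed.

Lemma Gamma_half_log_convex x : 0 < x -> Gamma (x + /2) ^ 2 <= Gamma x * Gamma (x + 1).
Proof.
  intros Hx.
  destruct (is_RInt_gen_Gamma x) as [H0 P0]; [exact Hx |].
  destruct (is_RInt_gen_Gamma (x + /2)) as [H1 _]; [lra |].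
  destruct (is_RInt_gen_Gamma (x + 1)) as [H2 P2]; [lra |].
  exact (is_RInt_gen_gamma_integrand_half_log_convex x _ _ _ H0 H1 H2 P0 P2).
Qed.

Definition gamma_ratio (x : R) : R := Gamma x * Gamma (x + 1) / Gamma (x + /2) ^ 2.

Lemma gamma_ratio_ge_1 x : 0 < x -> 1 <= gamma_ratio x.
Proof.
  intros Hx; unfold gamma_ratio.
  pose proof (Gamma_pos (x + /2) ltac:(lra)).
  apply Rmult_le_reg_r with (Gamma (x + /2) ^ 2); [apply pow_lt; lra |].
  unfold Rdiv; rewrite Rmult_assoc, Rinv_l, Rmult_1_l, Rmult_1_r by (apply pow_nonzero; lra).
  now apply Gamma_half_log_convex.
Qed.

Lemma gamma_ratio_succ x : 0 < x ->
  gamma_ratio (x + 1) = x * (x + 1) / (x + /2) ^ 2 * gamma_ratio x.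
Proof.
  intros Hx; unfold gamma_ratio.
  replace (x + 1 + 1) with ((x + 1) + 1) by ring.
  replace (x + 1 + /2) with ((x + /2) + 1) by ring.
  rewrite !Gamma_succ by lra.
  pose proof (Gamma_pos x Hx); pose proof (Gamma_pos (x + /2) ltac:(lra)).
  field; lra.
Qed.

Lemma gamma_ratio_le x : 0 < x -> gamma_ratio x <= (x + /2) / x.
Proof.
  intros Hx.
  assert (Hprod : gamma_ratio x * gamma_ratio (x + /2) = (x + /2) / x).
  { unfold gamma_ratio.
    replace (x + /2 + /2) with (x + 1) by field.
    replace (x + /2 + 1) with ((x + /2) + 1) by ring.
    rewrite (Gamma_succ (x + /2)), (Gamma_succ x) by lra.
    pose proof (Gamma_pos x Hx); pose proof (Gamma_pos (x + /2) ltac:(lra)).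
    field; lra. }
  pose proof (gamma_ratio_ge_1 x Hx); pose proof (gamma_ratio_ge_1 (x + /2) ltac:(lra)).
  assert (0 <= (gamma_ratio x) * (gamma_ratio (x + /2) - 1)) by (apply Rmult_le_pos; lra).
  lra.
Qed.

Lemma omega_ratio_gamma_ratio n : (1 <= n)%nat ->
  omega_ratio n = gamma_ratio (INR n / 2 + /2).
Proof.
  intros Hn; unfold omega_ratio, Omega, gamma_ratio.
  rewrite minus_INR, plus_INR by exact Hn; simpl INR.
  set (x := INR n / 2 + /2).
  replace ((INR n - 1) / 2 + 1) with x by (unfold x; field).
  replace (INR n / 2 + 1) with (x + /2) by (unfold x; field).
  replace ((INR n + 1) / 2 + 1) with (x + 1) by (unfold x; field).
  replace ((INR n - 1) / 2) with (INR n / 2 + - /2) by field.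
  replace ((INR n + 1) / 2) with (INR n / 2 + /2) by field.
  rewrite !Rpower_plus.
  assert (Hhalf : Rpower PI (- /2) * Rpower PI (/2) = 1)
    by (rewrite <- Rpower_plus, Rplus_opp_l; apply Rpower_O, PI_RGT_0).
  assert (0 < Rpower PI (INR n / 2)) by apply exp_pos.
  assert (0 < Rpower PI (- /2)) by apply exp_pos.
  assert (0 < x) by (unfold x; pose proof (pos_INR n); lra).
  pose proof (Gamma_pos x ltac:(lra)); pose proof (Gamma_pos (x + /2) ltac:(lra)).
  pose proof (Gamma_pos (x + 1) ltac:(lra)).
  replace (Rpower PI (/2)) with (/ Rpower PI (- /2)) by (field_simplify_eq; lra).
  field; lra.
Qed.

Definition omega_step (n : nat) : R := (INR n + 1) * (INR n + 3) / (INR n + 2) ^ 2.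

Lemma INR_ge_1 n : (1 <= n)%nat -> 1 <= INR n.
Proof. apply (le_INR 1). Qed.

Lemma omega_step_pos n : 0 < omega_step n.
Proof.
  pose proof (pos_INR n); unfold omega_step.
  apply Rdiv_lt_0_compat; [nra | apply pow_lt; lra].
Qed.

Lemma omega_ratio_ge_1 n : (1 <= n)%nat -> 1 <= omega_ratio n.
Proof.
  intros Hn; rewrite omega_ratio_gamma_ratio by exact Hn.
  apply gamma_ratio_ge_1; pose proof (pos_INR n); lra.
Qed.

Lemma omega_ratio_le n : (1 <= n)%nat -> omega_ratio n <= 1 + / INR (S n).
Proof.
  intros Hn; rewrite omega_ratio_gamma_ratio by exact Hn.
  pose proof (pos_INR n).
  replace (1 + / INR (S n)) with ((INR n / 2 + /2 + /2) / (INR n / 2 + /2))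
    by (rewrite S_INR; field; lra).
  apply gamma_ratio_le; lra.
Qed.

Lemma omega_ratio_add2 n : (1 <= n)%nat ->
  omega_ratio (n + 2) = omega_step n * omega_ratio n.
Proof.
  intros Hn; rewrite !omega_ratio_gamma_ratio by lia.
  pose proof (pos_INR n).
  rewrite plus_INR; simpl INR.
  replace ((INR n + (1 + 1)) / 2 + /2) with (INR n / 2 + /2 + 1) by field.
  rewrite gamma_ratio_succ by lra.
  unfold omega_step; f_equal; field; lra.
Qed.

Lemma s_fun_ge_1 n : (1 <= n)%nat -> 1 <= s_fun n.
Proof.
  intros Hn; pose proof (INR_ge_1 n Hn); unfold s_fun, r_fun.
  set (m := INR n) in *.
  replace (1 + 1 / (2 * m) - 3 / (8 * m ^ 2) + 3 / (16 * m ^ 3) + 3 / (128 * m ^ 4))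
    with (1 + (64 * m ^ 3 - 48 * m ^ 2 + 24 * m + 3) / (128 * m ^ 4)) by (field; lra).
  assert (0 <= (64 * m ^ 3 - 48 * m ^ 2 + 24 * m + 3) / (128 * m ^ 4));
    [apply Rdiv_le_0_compat; [nra | pose proof (pow_lt m 4); lra] | lra].
Qed.

Lemma r_fun_bounds n : (1 <= n)%nat -> 1 <= r_fun n <= 1 + / INR n.
Proof.
  intros Hn; pose proof (INR_ge_1 n Hn); unfold r_fun.
  set (m := INR n) in *.
  assert (0 < 16 * m ^ 3) by (pose proof (pow_lt m 3); lra).
  replace (1 + 1 / (2 * m) - 3 / (8 * m ^ 2) + 3 / (16 * m ^ 3))
    with (1 + (8 * m ^ 2 - 6 * m + 3) / (16 * m ^ 3)) by (field; lra).
  replace (1 + / m) with (1 + (16 * m ^ 2) / (16 * m ^ 3)) by (field; lra).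
  split.
  - assert (0 <= (8 * m ^ 2 - 6 * m + 3) / (16 * m ^ 3)); [apply Rdiv_le_0_compat; nra | lra].
  - apply Rplus_le_compat_l, Rmult_le_compat_r; [left; now apply Rinv_0_lt_compat | nra].
Qed.

(* The sign change of this difference at [n = 6] is why the lower bound needs [n >= 6]. *)
Lemma r_fun_add2 n : (1 <= n)%nat ->
  r_fun (n + 2) = omega_step n * r_fun n + 3 * (INR n - 6) / (16 * INR n ^ 3 * (INR n + 2) ^ 3).
Proof.
  intros Hn; pose proof (INR_ge_1 n Hn); unfold r_fun, omega_step.
  rewrite plus_INR; simpl INR; field; lra.
Qed.

Lemma s_fun_add2 n : (1 <= n)%nat ->
  s_fun (n + 2) = omega_step n * s_fun n
                  - (165 * INR n ^ 2 + 372 * INR n + 36) / (128 * INR n ^ 4 * (INR n + 2) ^ 4).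
Proof.
  intros Hn; pose proof (INR_ge_1 n Hn); unfold s_fun, r_fun, omega_step.
  rewrite plus_INR; simpl INR; field; lra.
Qed.

Lemma Rdiv_le_cross a b c d : 0 < b -> 0 < d -> a * d <= c * b -> a / b <= c / d.
Proof.
  intros Hb Hd H.
  assert (0 <= (c * b - a * d) / (b * d)) by (apply Rdiv_le_0_compat; nra).
  replace ((c * b - a * d) / (b * d)) with (c / d - a / b) in * by (field; lra).
  lra.
Qed.

Lemma Rdiv_lt_cross a b c d : 0 < b -> 0 < d -> a * d < c * b -> a / b < c / d.
Proof.
  intros Hb Hd H.
  assert (0 < (c * b - a * d) / (b * d)) by (apply Rdiv_lt_0_compat; nra).
  replace ((c * b - a * d) / (b * d)) with (c / d - a / b) in * by (field; lra).
  lra.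
Qed.

Lemma Rdiv_le_self a b : 0 <= a -> 1 <= b -> a / b <= a.
Proof.
  intros Ha Hb; rewrite <- (Rdiv_1_r a) at 2.
  apply Rdiv_le_cross; nra.
Qed.

Lemma nondecreasing_le_lim (v g : nat -> R) (l : R) :
  (forall i, v i <= v (S i)) -> (forall i, v i <= g i) -> is_lim_seq g l ->
  forall i, v i <= l.
Proof.
  intros Hmono Hg Hlim i.
  assert (Hchain : forall j, v i <= v (j + i)%nat).
  { induction j as [| j IH]; [apply Rle_refl | eapply Rle_trans; [exact IH | apply Hmono]]. }
  change (Rbar_le (v i) l).
  apply (is_lim_seq_le (fun _ => v i) (fun j => g (j + i)%nat)).
  - intros j; eapply Rle_trans; [apply Hchain | apply Hg].
  - apply is_lim_seq_const.
  - now apply is_lim_seq_incr_n.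
Qed.

Lemma is_lim_seq_one_plus_inv_S : is_lim_seq (fun i => 1 + / INR (S i)) 1.
Proof.
  assert (Hinv : is_lim_seq (fun i => / INR (S i)) 0).
  { apply (is_lim_seq_incr_1 (fun i => / INR i)).
    replace (Finite 0) with (Rbar_inv p_infty) by reflexivity.
    apply is_lim_seq_inv; [apply is_lim_seq_INR | discriminate]. }
  pose proof (is_lim_seq_plus' _ _ 1 0 (is_lim_seq_const 1) Hinv) as H.
  now rewrite Rplus_0_r in H.
Qed.

Lemma omega_ratio_lt_s_fun n : (1 <= n)%nat -> omega_ratio n < s_fun n.
Proof.
  intros Hn.
  set (v := fun i => omega_ratio (n + 2 * i) / s_fun (n + 2 * i)).
  assert (Hk : forall i, (1 <= n + 2 * i)%nat) by lia.
  assert (Hincr : forall i, v i < v (S i)).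
  { intros i; unfold v; replace (n + 2 * S i)%nat with (n + 2 * i + 2)%nat by lia.
    pose proof (Hk i) as Hki; set (k := (n + 2 * i)%nat) in *.
    rewrite omega_ratio_add2 by exact Hki.
    pose proof (s_fun_add2 k Hki); pose proof (INR_ge_1 k Hki).
    pose proof (s_fun_ge_1 k Hki); pose proof (s_fun_ge_1 (k + 2) ltac:(lia)).
    pose proof (omega_ratio_ge_1 k Hki); pose proof (omega_step_pos k).
    assert (0 < (165 * INR k ^ 2 + 372 * INR k + 36) / (128 * INR k ^ 4 * (INR k + 2) ^ 4)).
    { apply Rdiv_lt_0_compat; [nra |].
      apply Rmult_lt_0_compat; [pose proof (pow_lt (INR k) 4); lra | apply pow_lt; lra]. }
    apply Rdiv_lt_cross; [lra | lra | nra]. }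
  assert (Hbound : forall i, v i <= 1 + / INR (S i)).
  { intros i; unfold v.
    pose proof (omega_ratio_ge_1 _ (Hk i)); pose proof (s_fun_ge_1 _ (Hk i)).
    apply Rle_trans with (omega_ratio (n + 2 * i)).
    - apply Rdiv_le_self; lra.
    - eapply Rle_trans; [apply omega_ratio_le, Hk |].
      apply Rplus_le_compat_l, Rinv_le_contravar; [apply (lt_INR 0); lia | apply le_INR; lia]. }
  pose proof (nondecreasing_le_lim v _ 1 (fun i => Rlt_le _ _ (Hincr i)) Hbound
                is_lim_seq_one_plus_inv_S 1%nat).
  pose proof (Hincr 0%nat); unfold v in *; rewrite Nat.mul_0_r, Nat.add_0_r in *.
  pose proof (s_fun_ge_1 n Hn).
  apply Rmult_lt_reg_r with (/ s_fun n); [apply Rinv_0_lt_compat; lra |].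
  rewrite Rinv_r by lra; lra.
Qed.

Lemma r_fun_lt_omega_ratio n : (6 <= n)%nat -> r_fun n < omega_ratio n.
Proof.
  intros Hn.
  set (v := fun i => r_fun (n + 2 * i) / omega_ratio (n + 2 * i)).
  assert (Hk : forall i, (6 <= n + 2 * i)%nat) by lia.
  assert (Hstep : forall i, v i <= v (S i) /\ ((1 <= i)%nat -> v i < v (S i))).
  { intros i; unfold v; replace (n + 2 * S i)%nat with (n + 2 * i + 2)%nat by lia.
    pose proof (Hk i) as Hki; set (k := (n + 2 * i)%nat) in *.
    assert (Hk1 : (1 <= k)%nat) by lia.
    assert (H6 : 6 <= INR k) by (replace 6 with (INR 6) by (simpl; ring); now apply le_INR).
    rewrite omega_ratio_add2, r_fun_add2 by exact Hk1.
    pose proof (omega_ratio_ge_1 k Hk1); pose proof (r_fun_bounds k Hk1).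
    pose proof (omega_step_pos k).
    assert (0 < 16 * INR k ^ 3 * (INR k + 2) ^ 3)
      by (apply Rmult_lt_0_compat; [pose proof (pow_lt (INR k) 3); lra | apply pow_lt; lra]).
    assert (0 <= 3 * (INR k - 6) / (16 * INR k ^ 3 * (INR k + 2) ^ 3))
      by (apply Rdiv_le_0_compat; lra).
    split.
    - apply Rdiv_le_cross; nra.
    - intros Hi.
      assert (8 <= INR k) by (replace 8 with (INR 8) by (simpl; ring); apply le_INR; lia).
      assert (0 < 3 * (INR k - 6) / (16 * INR k ^ 3 * (INR k + 2) ^ 3))
        by (apply Rdiv_lt_0_compat; lra).
      apply Rdiv_lt_cross; nra. }
  assert (Hbound : forall i, v i <= 1 + / INR (S i)).
  { intros i; unfold v.
    pose proof (omega_ratio_ge_1 _ (Nat.le_trans 1 6 _ ltac:(lia) (Hk i))).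
    pose proof (r_fun_bounds _ (Nat.le_trans 1 6 _ ltac:(lia) (Hk i))).
    apply Rle_trans with (r_fun (n + 2 * i)).
    - apply Rdiv_le_self; lra.
    - eapply Rle_trans; [apply (r_fun_bounds (n + 2 * i)); lia |].
      apply Rplus_le_compat_l, Rinv_le_contravar; [apply (lt_INR 0); lia | apply le_INR; lia]. }
  pose proof (nondecreasing_le_lim v _ 1 (fun i => proj1 (Hstep i)) Hbound
                is_lim_seq_one_plus_inv_S 2%nat).
  pose proof (proj1 (Hstep 0%nat)); pose proof (proj2 (Hstep 1%nat) (le_n 1)).
  unfold v in *; rewrite Nat.mul_0_r, Nat.add_0_r in *.
  pose proof (omega_ratio_ge_1 n ltac:(lia)).
  apply Rmult_lt_reg_r with (/ omega_ratio n); [apply Rinv_0_lt_compat; lra |].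
  rewrite Rinv_r by lra; lra.
Qed.

Theorem theorem16 :
  (forall n : nat, (6 <= n)%nat -> r_fun n < omega_ratio n) /\
  (forall n : nat, (1 <= n)%nat -> omega_ratio n < s_fun n).
Proof.
  split; [exact r_fun_lt_omega_ratio | exact omega_ratio_lt_s_fun].
Qed.
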